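(* Let $S$ be a skew lattice that is strongly distributive or co-strongly distributive. Then $S$ is a left distributive solution of the Yang–Baxter equation.
   Context: A skew lattice is a set $S$ with two binary operations $\wedge,\vee$, each idempotent and associative, satisfying the absorption laws $x\wedge(x\vee y)=x=x\vee(x\wedge y)$ and $(x\wedge y)\vee y=y=(x\vee y)\wedge y$ for all $x,y\in S$. $S$ is strongly distributive if it satisfies $(x\vee y)\wedge z=(x\wedge z)\vee(y\wedge z)$ and $x\wedge(y\vee z)=(x\wedge y)\vee(x\wedge z)$; it is co-strongly distributive if it satisfies $(x\wedge y)\vee z=(x\vee z)\wedge(y\vee z)$ and $x\vee(y\wedge z)=(x\vee y)\wedge(x\vee z)$. $S$ is a left distributive solution if $r_L(x,y)=(x\wedge y,y\vee x)$ satisfies $(r_L\times\mathrm{id})\circ(\mathrm{id}\times r_L)\circ(r_L\times\mathrm{id})=(\mathrm{id}\times r_L)\circ(r_L\times\mathrm{id})\circ(\mathrm{id}\times r_L)$. *)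

Definition idempotent {S : Type} (op : S -> S -> S) : Prop := forall x, op x x = x.
Definition associative {S : Type} (op : S -> S -> S) : Prop :=
  forall x y z, op x (op y z) = op (op x y) z.

Definition skew_lattice {S : Type} (meet join : S -> S -> S) : Prop :=
  idempotent meet /\ idempotent join /\ associative meet /\ associative join /\
  (forall x y, meet x (join x y) = x) /\
  (forall x y, join x (meet x y) = x) /\
  (forall x y, join (meet x y) y = y) /\
  (forall x y, meet (join x y) y = y).

Definition strongly_distributive {S : Type} (meet join : S -> S -> S) : Prop :=
  (forall x y z, meet (join x y) z = join (meet x z) (meet y z)) /\
  (forall x y z, meet x (join y z) = join (meet x y) (meet x z)).

Definition co_strongly_distributive {S : Type} (meet join : S -> S -> S) : Prop :=
  (forall x y z, join (meet x y) z = meet (join x z) (join y z)) /\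
  (forall x y z, join x (meet y z) = meet (join x y) (join x z)).

Definition r_L {S : Type} (meet join : S -> S -> S) (p : S * S) : S * S :=
  (meet (fst p) (snd p), join (snd p) (fst p)).

Definition r12 {S : Type} (r : S * S -> S * S) (t : S * S * S) : S * S * S :=
  let '(x, y, z) := t in let '(a, b) := r (x, y) in (a, b, z).
Definition r23 {S : Type} (r : S * S -> S * S) (t : S * S * S) : S * S * S :=
  let '(x, y, z) := t in let '(b, c) := r (y, z) in (x, b, c).

(* Braid relation (r x id)(id x r)(r x id) = (id x r)(r x id)(id x r). *)
Definition is_YB_solution {S : Type} (r : S * S -> S * S) : Prop :=
  forall t : S * S * S, r12 r (r23 r (r12 r t)) = r23 r (r12 r (r23 r t)).

Definition left_distributive_solution {S : Type} (meet join : S -> S -> S) : Prop :=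
  is_YB_solution (r_L meet join).


(* Write x/\y for [meet x y] and x\/y for [join x y].
   Expanding both sides of the braid relation for r_L(x,y) = (x/\y, y\/x)
   at a triple (x,y,z) gives, componentwise,
     left  = ((x/\y)/\((y\/x)/\z), ((y\/x)/\z)\/(x/\y), z\/(y\/x)),
     right = (x/\(y/\z), ((y/\z)\/x)/\(z\/y), (z\/y)\/((y/\z)\/x)).
   The outer components agree in every skew lattice: they only need
   associativity and the absorption laws y/\(y\/x) = y, y\/(y/\z) = y.
   Hence r_L is a solution exactly when the middle identity
     ((y\/x)/\z)\/(x/\y) = ((y/\z)\/x)/\(z\/y)
   holds, and this identity follows from strong distributivity and,
   dually, from co-strong distributivity. *)

Section BraidRelation.

Variables (S : Type) (meet join : S -> S -> S).

Hypothesis meet_assoc : associative meet.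
Hypothesis join_assoc : associative join.
Hypothesis meet_join_absorb : forall x y, meet x (join x y) = x.
Hypothesis join_meet_absorb : forall x y, join x (meet x y) = x.

Lemma braid_first_component (x y z : S) :
  meet (meet x y) (meet (join y x) z) = meet x (meet y z).
Proof.
  rewrite <- meet_assoc, (meet_assoc y (join y x) z), meet_join_absorb.
  reflexivity.
Qed.

Lemma braid_third_component (x y z : S) :
  join z (join y x) = join (join z y) (join (meet y z) x).
Proof.
  rewrite <- (join_assoc z y), (join_assoc y (meet y z) x), join_meet_absorb.
  reflexivity.
Qed.

Definition braid_middle_identity : Prop :=
  forall x y z : S,
    join (meet (join y x) z) (meet x y) = meet (join (meet y z) x) (join z y).

Lemma left_distributive_solution_of_middle :
  braid_middle_identity -> left_distributive_solution meet join.
Proof.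
  intros middle [[x y] z].
  unfold r12, r23, r_L; simpl.
  rewrite braid_first_component, middle, braid_third_component.
  reflexivity.
Qed.

(* Strong distributivity gives the middle identity: both sides reduce to
   (y/\z)\/(x/\z)\/(x/\y). *)
Lemma middle_identity_of_strongly_distributive :
  strongly_distributive meet join -> braid_middle_identity.
Proof.
  intros [meet_join_distr_r meet_join_distr_l] x y z.
  rewrite !meet_join_distr_r, <- meet_assoc, meet_join_absorb,
    meet_join_distr_l, join_assoc.
  reflexivity.
Qed.

(* Dually, co-strong distributivity gives the middle identity: both sides
   reduce to (y\/x)/\(z\/x)/\(z\/y). *)
Lemma middle_identity_of_co_strongly_distributive :
  co_strongly_distributive meet join -> braid_middle_identity.
Proof.
  intros [join_meet_distr_r join_meet_distr_l] x y z.
  rewrite join_meet_distr_r, <- join_assoc, join_meet_absorb,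
    (join_meet_distr_l z x y), (join_meet_distr_r y z x), meet_assoc.
  reflexivity.
Qed.

End BraidRelation.

Theorem mainTheorem11 (S : Type) (meet join : S -> S -> S) :
  skew_lattice meet join ->
  strongly_distributive meet join \/ co_strongly_distributive meet join ->
  left_distributive_solution meet join.
Proof.
  intros [_ [_ [meet_assoc [join_assoc [meet_join_absorb [join_meet_absorb _]]]]]]
    distributive.
  apply (@left_distributive_solution_of_middle S meet join
           meet_assoc join_assoc meet_join_absorb join_meet_absorb).
  destruct distributive as [strong | co_strong].
  - now apply middle_identity_of_strongly_distributive.
  - now apply middle_identity_of_co_strongly_distributive.
Qed.
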